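(* Let $f:[-1,1]\to\mathbb{R}$ be continuous, let $n\geq 0$, and let $\underline{c}=(c_0,\ldots,c_n)^\top\in\mathbb{R}^{n+1}$. Define $L[\underline{c}]=(\mu_0,\ldots,\mu_n)^\top$ by \[ \mu_i=\int_{-1}^1\operatorname{sign}\!\Big(f(x)-\sum_{j=0}^n c_jU_j(x)\Big)U_i(x)\,dx,\qquad 0\leq i\leq n. \] If $M:=\tfrac{2}{\pi}(n+2)^2\max_{0\leq i\leq n}|\mu_i|<1$, then \[ \Big\|f-\sum_{j=0}^n c_jU_j\Big\|_1\leq\frac{1}{1-M}\,\|f-p_n^{L_1}\|_1, \] where $p_n^{L_1}$ is the best $L_1$ polynomial approximant of degree $\leq n$ to $f$.
   Context: $U_j$ is the Chebyshev polynomial of the second kind of degree $j$. $\operatorname{sign}(y)$ equals $1$ for $y>0$, $0$ for $y=0$, $-1$ for $y<0$. $\|g\|_1=\int_{-1}^1|g(x)|\,dx$, and $p_n^{L_1}$ is the (unique) real polynomial of degree $\leq n$ minimizing $\|f-q\|_1$. *)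

From HB Require Import structures.
From mathcomp Require Import all_boot all_order all_algebra.
From mathcomp Require Import all_classical all_reals all_analysis.
Set Implicit Arguments. Unset Strict Implicit. Unset Printing Implicit Defensive.
Import Order.TTheory GRing.Theory Num.Theory.
Local Open Scope ring_scope.
Local Open Scope classical_set_scope.

(* Chebyshev polynomials of the second kind:
   U_0 = 1, U_1 = 2X, U_{j+2} = 2X U_{j+1} - U_j. *)
Fixpoint chebU_pair (R : nzRingType) (j : nat) : {poly R} * {poly R} :=
  match j with
  | 0%N => (1, 2%:R *: 'X)
  | j'.+1 => let (a, b) := chebU_pair R j' in (b, 2%:R *: 'X * b - a)
  end.
Definition chebU (R : nzRingType) (j : nat) : {poly R} := (chebU_pair R j).1.

Definition int11 (R : realType) (g : R -> R) : R :=
  Rintegral (@lebesgue_measure R) `[(-1)%R, 1%R] g.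

Definition L1norm (R : realType) (g : R -> R) : R := int11 (fun x => `|g x|).

Definition chebU_sum (R : realType) (n : nat) (c : 'I_n.+1 -> R) (x : R) : R :=
  \sum_(j < n.+1) c j * (chebU R j).[x].

Definition Lmu (R : realType) (f : R -> R) (n : nat) (c : 'I_n.+1 -> R)
    (i : 'I_n.+1) : R :=
  int11 (fun x => Num.sg (f x - chebU_sum c x) * (chebU R i).[x]).

Definition best_L1_approx (R : realType) (f : R -> R) (n : nat) (p : {poly R}) :=
  (size p <= n.+1)%N /\
  forall q : {poly R}, (size q <= n.+1)%N ->
    L1norm (fun x => f x - p.[x]) <= L1norm (fun x => f x - q.[x]).

From HB Require Import structures.
From mathcomp Require Import all_boot all_order all_algebra.
From mathcomp Require Import all_classical all_reals all_analysis.
From mathcomp Require Import measurable_realfun ring lra zify.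
Import Order.TTheory GRing.Theory Num.Theory numFieldNormedType.Exports.
Local Open Scope ring_scope.
Local Open Scope classical_set_scope.

(* Put e = f - sum_j c_j U_j and q = p - sum_j c_j U_j, a polynomial of degree
   <= n.  Since |e| = sg(e) e = sg(e) (f - p) + sg(e) q, we get
   ||e||_1 <= ||f - p||_1 + int sg(e) q, and writing q = sum_j d_j U_j turns the
   last integral into sum_j d_j mu_j.  The coefficients d_j are controlled by
   ||q||_1: under x = cos t we have U_j(cos t) sin t = sin((j+1)t), so by
   orthogonality of the sines d_j = 2/pi int_0^pi q(cos t) sin t sin((j+1)t) dt
   and |d_j| <= 2/pi ||q||_1.  Finally ||q||_1 <= ||e||_1 + ||f - p||_1 <= 2 ||e||_1
   by optimality of p, and 2(n+1) <= (n+2)^2 gives ||e||_1 <= ||f - p||_1 + M ||e||_1. *)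

Lemma chebU0 (R : nzRingType) : chebU R 0 = 1. Proof. by []. Qed.

Lemma chebU1 (R : nzRingType) : chebU R 1 = 2%:R *: 'X. Proof. by []. Qed.

Lemma chebUSS (R : nzRingType) j :
  chebU R j.+2 = 2%:R *: 'X * chebU R j.+1 - chebU R j.
Proof.
have pairE k : chebU_pair R k = (chebU R k, chebU R k.+1).
  by elim: k => [//|k IHk]; rewrite /chebU /= IHk.
by rewrite {1}/chebU /= pairE.
Qed.

Lemma size_lead_coef_chebU (R : numDomainType) j :
  size (chebU R j) = j.+1 /\ lead_coef (chebU R j) = 2%:R ^+ j.
Proof.
have two_neq0 : (2%:R : R) != 0 by rewrite pnatr_eq0.
elim/ltn_ind: j => -[|[|j]] IH.
- by rewrite chebU0 size_poly1 lead_coef1.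
- rewrite chebU1 -mul_polyC size_mulX ?polyC_eq0 // size_polyC two_neq0.
  by rewrite lead_coefMX lead_coefC expr1.
- have [size1 lead1] := IH j.+1 (ltnSn _).
  have [size0 _] := IH j (leqnSn _).
  have sizeX : size (2%:R *: 'X * chebU R j.+1) = j.+3.
    by rewrite -scalerAl size_scale // mulrC size_mulX -?size_poly_eq0 ?size1.
  have lt_size : (size (chebU R j) < size (2%:R *: 'X * chebU R j.+1)%R)%N.
    by rewrite sizeX size0.
  rewrite chebUSS size_addl ?size_opp // lead_coefDl ?size_opp //.
  by split => //; rewrite -scalerAl lead_coefZ (mulrC 'X) lead_coefMX lead1 -exprS.
Qed.

Lemma size_chebU (R : numDomainType) j : size (chebU R j) = j.+1.
Proof. exact: (size_lead_coef_chebU R j).1. Qed.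

Lemma size_chebU_sum_le {R : numDomainType} {n : nat} (c : 'I_n.+1 -> R) :
  (size (\sum_(j < n.+1) c j *: chebU R j)%R <= n.+1)%N.
Proof.
apply: (big_ind (fun q : {poly R} => size q <= n.+1)%N) => [|p q|j _].
- by rewrite size_poly0.
- by move=> size_p size_q; rewrite (leq_trans (size_polyD _ _)) // geq_max size_p.
- by rewrite (leq_trans (size_scale_leq _ _)) // size_chebU.
Qed.

Lemma chebU_span {R : numFieldType} {n : nat} {q : {poly R}} : (size q <= n.+1)%N ->
  exists d : 'I_n.+1 -> R, q = \sum_(j < n.+1) d j *: chebU R j.
Proof.
elim: n q => [|n IH] q size_q.
  by exists (fun=> q`_0); rewrite big_ord1 chebU0 alg_polyC; exact: size1_polyC.
pose a := q`_n.+1 / 2%:R ^+ n.+1.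
have : (size (q - a *: chebU R n.+1)%R <= n.+1)%N.
  apply/leq_sizeP => i; rewrite leq_eqVlt => /predU1P[<-|lt_ni].
    rewrite coefB coefZ.
    have -> : (chebU R n.+1)`_n.+1 = lead_coef (chebU R n.+1) by rewrite lead_coefE size_chebU.
    by rewrite (size_lead_coef_chebU R n.+1).2 divfK ?subrr //.
  rewrite coefB coefZ; move/leq_sizeP: size_q => -> //.
  by rewrite nth_default ?size_chebU // mulr0 subrr.
move=> /IH [d sum_d].
exists (fun j : 'I_n.+2 => if unlift ord_max j is Some k then d k else a).
rewrite big_ord_recr /= unlift_none -[q](subrK (a *: chebU R n.+1)) sum_d.
congr (_ + _); apply: eq_bigr => i _.
have -> : widen_ord (leqnSn n.+1) i = lift ord_max i.
  exact/val_inj/esym/lift_max.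
by rewrite liftK.
Qed.

Lemma continuous_mulfun {R : realType} {T : topologicalType} (s t : T -> R) :
  continuous s -> continuous t -> continuous (fun x => s x * t x).
Proof. by move=> cs ct x; exact: (continuousM (cs x) (ct x)). Qed.

Lemma continuous_normfun {R : realType} {T : topologicalType} (s : T -> R) :
  continuous s -> continuous (fun x => `|s x|).
Proof. by move=> cs x; exact: (continuous_comp (cs x) (@norm_continuous _ R^o (s x))). Qed.

Section Integrals_over_a_measure.
Context {d : measure_display} {T : measurableType d} {R : realType}.
Context {mu : {measure set T -> \bar R}} {D : set T}.
Hypothesis mD : measurable D.

Lemma Rintegral_sum (I : Type) (s : seq I) (F : I -> T -> R) :
  (forall i, mu.-integrable D (EFin \o F i)) ->
  \int[mu]_(x in D) (\sum_(i <- s) F i x) = \sum_(i <- s) \int[mu]_(x in D) F i x.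
Proof.
move=> intF; elim: s => [|i s IHs].
  by under eq_Rintegral do rewrite big_nil; rewrite Rintegral_cst // mul0r big_nil.
under eq_Rintegral do rewrite big_cons.
rewrite big_cons -IHs RintegralD //.
have -> : EFin \o (fun x => \sum_(i <- s) F i x) = fun x => \sum_(i <- s) (F i x)%:E.
  by apply/funext => x; rewrite /= sumEFin.
by apply: integrable_sum => // j _; exact: intF.
Qed.

Lemma measurable_sgr : measurable_fun [set: R] (Num.sg : R -> R).
Proof.
apply: nondecreasing_measurable => // x y le_xy.
by case: (sgrP x) => [x0|x_gt0|x_lt0]; case: (sgrP y) => [y0|y_gt0|y_lt0]; lra.
Qed.

Lemma bounded_sgr (A : set T) (e : T -> R) : [bounded Num.sg (e x) | x in A].
Proof.
exists 1; split; rewrite ?num_real // => M M_gt1 x _ /=.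
by rewrite normr_sg (le_trans _ (ltW M_gt1)) // lern1 leq_b1.
Qed.

Lemma integrable_sgr_mul {e h : T -> R} : measurable_fun D e ->
  mu.-integrable D (EFin \o h) ->
  mu.-integrable D (EFin \o (fun x => Num.sg (e x) * h x)).
Proof.
move=> me ih; have msg : measurable_fun D (fun x => Num.sg (e x)).
  exact: measurableT_comp measurable_sgr me.
exact: (integrableMr mD msg (bounded_sgr D e) ih).
Qed.

Lemma Rintegral_abs_le_sgr {e g : T -> R} :
  mu.-integrable D (EFin \o e) -> mu.-integrable D (EFin \o g) ->
  \int[mu]_(x in D) `|e x|
    <= \int[mu]_(x in D) `|g x| + \int[mu]_(x in D) (Num.sg (e x) * (e x - g x)).
Proof.
move=> ie ig; have me : measurable_fun D e by exact/measurable_EFinP/(measurable_int mu ie).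
have ieg : mu.-integrable D (EFin \o (fun x => e x - g x)) := integrableB mD ie ig.
have sg_mul_le (y z : R) : Num.sg y * z <= `|z|.
  by rewrite (le_trans (ler_norm _)) // normrM normr_sg ler_piMl // lern1 leq_b1.
have -> : \int[mu]_(x in D) `|e x| =
    \int[mu]_(x in D) (Num.sg (e x) * g x + Num.sg (e x) * (e x - g x)).
  by apply: eq_Rintegral => x _; rewrite -mulrDr addrC subrK -normrEsg.
rewrite RintegralD //; [|exact: integrable_sgr_mul..].
by rewrite lerD2r le_Rintegral //; [exact: integrable_sgr_mul|exact: integrable_norm].
Qed.

Lemma Rintegral_abs_subr_le {e g : T -> R} :
  mu.-integrable D (EFin \o e) -> mu.-integrable D (EFin \o g) ->
  \int[mu]_(x in D) `|e x - g x| <= \int[mu]_(x in D) `|e x| + \int[mu]_(x in D) `|g x|.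
Proof.
move=> ie ig; rewrite -RintegralD //; [|exact: integrable_norm..].
rewrite le_Rintegral //.
- exact/integrable_norm/(integrableB mD ie ig).
- exact: (integrableD mD (integrable_norm ie) (integrable_norm ig)).
by move=> x _; rewrite ler_normB.
Qed.

End Integrals_over_a_measure.

Section Integrals_on_intervals.
Context {R : realType}.
Notation mu := (@lebesgue_measure R).

Lemma continuous_itv_integrable {a b : R} {g : R -> R} :
  {within `[a, b], continuous g} -> mu.-integrable `[a, b] (EFin \o g).
Proof. by apply: continuous_compact_integrable; exact: segment_compact. Qed.

Lemma Rintegral_continuous_FTC2 {f F : R -> R} {a b : R} : a < b ->
  continuous f -> (forall x : R, is_derive x 1 F (f x)) ->
  \int[mu]_(x in `[a, b]) f x = F b - F a.
Proof.
move=> lt_ab cf dF.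
have cF : continuous F.
  by move=> x; apply/differentiable_continuous/derivable1_diffP; exact: ex_derive.
apply: EFin_inj; rewrite /Rintegral fineK; last first.
  by apply: integral_fune_fin_num => //; exact/continuous_itv_integrable/continuous_subspaceT.
rewrite (@continuous_FTC2 _ f F) //=.
- exact/continuous_subspaceT.
- split; first by move=> x _; exact: ex_derive.
  + exact: cvg_at_right_filter (cF a).
  + exact: cvg_at_left_filter (cF b).
- by move=> x _; rewrite derive1E derive_val.
Qed.

Lemma Rintegral_cos_subst (G : R -> R) : continuous G ->
  \int[mu]_(x in `[-1, 1]) G x = \int[mu]_(t in `[0, pi]) (G (cos t) * sin t).
Proof.
move=> cG.
have dcos : (@cos R)^`() = (fun x => - sin x).
  by apply/funext => x; rewrite derive1E derive_val.
have cdcos : continuous (@cos R)^`().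
  by rewrite dcos => x; apply: continuousN; exact: continuous_sin.
have := @integration_by_substitution_decreasing R cos G 0 pi.
rewrite cospi cos0 /Rintegral => ->.
- by congr fine; apply: eq_integral => x _; rewrite /= dcos opprK.
- exact: pi_ge0.
- by move=> x y x0pi y0pi; rewrite ltr_cos.
- by move=> x _; exact: cdcos.
- by apply/cvg_ex; eexists; exact: cvg_at_right_filter (cdcos 0).
- by apply/cvg_ex; eexists; exact: cvg_at_left_filter (cdcos pi).
- split; first by move=> x _; exact: derivable_cos.
  + by apply: cvg_at_right_filter; exact: continuous_cos.
  + by apply: cvg_at_left_filter; exact: continuous_cos.
- exact/continuous_subspaceT.
Qed.

Lemma continuous_cos_mull (k : R) : continuous (fun t => cos (k * t)).
Proof. by move=> t; apply: continuous_comp; [exact: mulrl_continuous | exact: continuous_cos]. Qed.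

Lemma continuous_sin_mull (k : R) : continuous (fun t => sin (k * t)).
Proof. by move=> t; apply: continuous_comp; [exact: mulrl_continuous | exact: continuous_sin]. Qed.

Lemma sin_natmul_pi (m : nat) : sin (m%:R * pi) = 0 :> R.
Proof. by have := alternatingn (@sinDpi R) m 0; rewrite add0r sin0 mulr0 mulr_natl. Qed.

Lemma Rintegral_cos_natmul (k : nat) :
  \int[mu]_(t in `[0, pi]) cos (k%:R * t) = if k == 0%N then pi else 0.
Proof.
case: k => [|k] /=.
  have did (x : R) : is_derive x 1 id (cos (0%:R * x)).
    by rewrite mul0r cos0; exact: is_derive_id.
  by rewrite (Rintegral_continuous_FTC2 (pi_gt0 R) (continuous_cos_mull 0) did) subr0.
have k_neq0 : k.+1%:R != 0 :> R by rewrite pnatr_eq0.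
have dsin (x : R) : is_derive x 1 (fun t => sin (k.+1%:R * t) / k.+1%:R) (cos (k.+1%:R * x)).
  apply: is_derive_eq.
  by rewrite !scaler0 add0r mulr_algr scalerA mulVf ?scale1r.
rewrite (Rintegral_continuous_FTC2 (pi_gt0 R) (continuous_cos_mull _) dsin).
by rewrite sin_natmul_pi mulr0 sin0 mul0r subrr.
Qed.

Lemma Rintegral_sin_mul_sin (a b : nat) :
  \int[mu]_(t in `[0, pi]) (sin (a.+1%:R * t) * sin (b.+1%:R * t)) =
  if a == b then pi / 2 else 0.
Proof.
pose k := `|a - b|%N.
have product_to_sum (t : R) : sin (a.+1%:R * t) * sin (b.+1%:R * t) =
    2^-1 * (cos (k%:R * t) - cos ((a + b).+2%:R * t)).
  have cos_dist : cos (k%:R * t) = cos (a.+1%:R * t - b.+1%:R * t).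
    rewrite -mulrBl (_ : a.+1%:R - b.+1%:R = a%:R - b%:R :> R); last first.
      by rewrite -[a.+1]addn1 -[b.+1]addn1 !natrD; ring.
    rewrite /k; case: (leqP a b) => [le_ab|lt_ba].
      by rewrite distnEr // natrB // -cosN -mulNr opprB.
    by rewrite distnEl ?natrB // ltnW.
  have -> : (a + b).+2%:R * t = a.+1%:R * t + b.+1%:R * t.
    by rewrite -mulrDl -natrD addSn addnS.
  by rewrite cos_dist cosB cosD; field.
have int_cos (m : nat) : mu.-integrable `[0, pi] (EFin \o (fun t => cos (m%:R * t))).
  exact/continuous_itv_integrable/continuous_subspaceT/continuous_cos_mull.
under eq_Rintegral do rewrite product_to_sum.
rewrite RintegralZl //; last exact: (integrableB _ (int_cos _) (int_cos _)).
rewrite RintegralB // !Rintegral_cos_natmul /k distn_eq0 /= subr0.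
by case: eqP => _; rewrite ?mulr0 // mulrC.
Qed.

Lemma horner_chebU_cos j (t : R) : (chebU R j).[cos t] * sin t = sin (j.+1%:R * t).
Proof.
elim/ltn_ind: j => -[|[|j]] IH.
- by rewrite chebU0 hornerC !mul1r.
- by rewrite chebU1 hornerZ hornerX !mulr_natl sin_mulr2n mulrnAl.
- rewrite chebUSS hornerD hornerN -scalerAl hornerZ hornerM hornerX.
  rewrite mulrBl -!mulrA (mulrC _ (sin t)) mulrA (mulrC (sin t)) !IH //.
  have -> : j.+3%:R * t = j.+2%:R * t + t by rewrite (mulrSr 1 j.+2) mulrDl mul1r.
  have -> : j.+1%:R * t = j.+2%:R * t - t by rewrite (mulrSr 1 j.+1) mulrDl mul1r addrK.
  rewrite !sinD cosN sinN; ring.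
Qed.

Section Chebyshev_coefficients.
Variables (n : nat) (d : 'I_n.+1 -> R).
Let q := \sum_(i < n.+1) d i *: chebU R i.

Lemma Rintegral_chebU_sum_sin (j : 'I_n.+1) :
  \int[mu]_(t in `[0, pi]) (q.[cos t] * sin t * sin (j.+1%:R * t)) = d j * (pi / 2).
Proof.
have integrandE (t : R) : q.[cos t] * sin t * sin (j.+1%:R * t) =
    \sum_(i < n.+1) d i * (sin (i.+1%:R * t) * sin (j.+1%:R * t)).
  rewrite horner_sum !mulr_suml; apply: eq_bigr => i _.
  by rewrite hornerZ -(mulrA (d i)) horner_chebU_cos -mulrA.
have int_sin_sin (i : 'I_n.+1) :
    mu.-integrable `[0, pi] (EFin \o (fun t => sin (i.+1%:R * t) * sin (j.+1%:R * t))).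
  by apply/continuous_itv_integrable/continuous_subspaceT/continuous_mulfun;
    exact: continuous_sin_mull.
under eq_Rintegral do rewrite integrandE.
rewrite Rintegral_sum //; last by move=> i; exact: integrableZl (int_sin_sin i).
rewrite (bigD1 j) //= big1 ?addr0 => [|i ne_ij].
  by rewrite RintegralZl // Rintegral_sin_mul_sin eqxx.
by rewrite RintegralZl // Rintegral_sin_mul_sin ifN ?mulr0.
Qed.

Lemma abs_coef_chebU_le (j : 'I_n.+1) : `|d j| <= 2 / pi * L1norm (fun x => q.[x]).
Proof.
have gt0_pi := pi_gt0 R.
have c_hornerq_cos : continuous (fun t => q.[cos t]).
  by move=> t; apply: continuous_comp; [exact: continuous_cos | exact: continuous_horner].
have c_integrand : continuous (fun t => q.[cos t] * sin t * sin (j.+1%:R * t)).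
  apply: continuous_mulfun; last exact: continuous_sin_mull.
  by apply: continuous_mulfun => //; exact: continuous_sin.
have : `|d j * (pi / 2)| <= L1norm (fun x => q.[x]).
  rewrite -Rintegral_chebU_sum_sin /L1norm /int11 Rintegral_cos_subst; last first.
    by apply: continuous_normfun; exact: continuous_horner.
  apply: le_trans (le_normr_Rintegral _ _) _ => //.
    exact/continuous_itv_integrable/continuous_subspaceT.
  apply: le_Rintegral => //.
  - exact/continuous_itv_integrable/continuous_subspaceT/continuous_normfun.
  - apply/continuous_itv_integrable/continuous_subspaceT/continuous_mulfun.
      exact: continuous_normfun.
    exact: continuous_sin.
  move=> t; rewrite /= in_itv /= => /andP[t_ge0 t_lepi].
  rewrite !normrM (ger0_norm (sin_ge0_pi _)) ?t_ge0 ?t_lepi //.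
  by rewrite ler_piMr ?mulr_ge0 ?sin_ge0_pi ?t_ge0 ?t_lepi ?sin_max.
rewrite normrM (gtr0_norm (divr_gt0 gt0_pi _)) // -ler_pdivlMr ?divr_gt0 //.
by rewrite invf_div mulrC.
Qed.

End Chebyshev_coefficients.

Lemma int11_weighted_poly_le {w : R -> R} {n : nat} {q : {poly R}} {m : R} :
  measurable_fun `[(-1 : R), 1] w -> [bounded w x | x in `[(-1 : R), 1]] ->
  (size q <= n.+1)%N ->
  (forall i : 'I_n.+1, `|int11 (fun x => w x * (chebU R i).[x])| <= m) ->
  int11 (fun x => w x * q.[x]) <= n.+1%:R * (2 / pi * L1norm (fun x => q.[x])) * m.
Proof.
move=> mw bw /chebU_span[d ->] moment_le.
have int_w (r : {poly R}) : mu.-integrable `[(-1 : R), 1] (EFin \o (fun x => w x * r.[x])).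
  have int_r : mu.-integrable `[(-1 : R), 1] (EFin \o horner r).
    exact/continuous_itv_integrable/continuous_subspaceT/continuous_horner.
  exact: (@integrableMr _ _ R mu _ (measurable_itv _) w _ mw bw int_r).
set Q := L1norm _; rewrite /int11.
under eq_Rintegral do rewrite horner_sum mulr_sumr.
rewrite Rintegral_sum //.
rewrite (_ : n.+1%:R * (2 / pi * Q) * m = \sum_(i < n.+1) 2 / pi * Q * m); last first.
  by rewrite sumr_const card_ord; ring.
apply: ler_sum => i _.
under eq_Rintegral do rewrite hornerZ mulrCA.
rewrite RintegralZl // (le_trans (ler_norm _)) // normrM.
by rewrite ler_pM // ?abs_coef_chebU_le ?moment_le.
Qed.

End Integrals_on_intervals.

Section Sign_moments.
Context {R : realType} {f : R -> R} {n : nat}.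
Variable c : 'I_n.+1 -> R.
Hypothesis hf : {within `[(-1 : R), 1], continuous f}.

Let s := \sum_(j < n.+1) c j *: chebU R j.
Let e x := f x - chebU_sum c x.

Lemma chebU_sumE : chebU_sum c = horner s.
Proof.
by apply/funext => x; rewrite /chebU_sum /s horner_sum; apply: eq_bigr => j _; rewrite hornerZ.
Qed.

Lemma L1norm_sub_chebU_sum_le {p : {poly R}} {m : R} : (size p <= n.+1)%N ->
  (forall i, `|Lmu f c i| <= m) ->
  L1norm e <= L1norm (fun x => f x - p.[x])
                + n.+1%:R * (2 / pi * (L1norm e + L1norm (fun x => f x - p.[x]))) * m.
Proof.
move=> size_p Lmu_le.
have c_sub (r : {poly R}) : {within `[(-1 : R), 1], continuous (fun x => f x - r.[x])}.
  have cr : {within `[(-1 : R), 1], continuous (horner r)}.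
    by apply/continuous_subspaceT => x; exact: continuous_horner.
  by move=> x; apply: continuousB; [exact: hf | exact: cr].
have ce : {within `[(-1 : R), 1], continuous e} by rewrite /e chebU_sumE; exact: c_sub.
have int_e := continuous_itv_integrable ce.
have int_g := continuous_itv_integrable (c_sub p).
have sub_eg x : e x - (f x - p.[x]) = (p - s).[x].
  by rewrite /e chebU_sumE hornerD hornerN; ring.
have size_ps : (size (p - s)%R <= n.+1)%N.
  by rewrite (leq_trans (size_polyD _ _)) // size_polyN geq_max size_p size_chebU_sum_le.
have msg : measurable_fun `[(-1 : R), 1] (fun x => Num.sg (e x)).
  exact: measurableT_comp measurable_sgr (subspace_continuous_measurable_fun (measurable_itv _) ce).
have L1_ps_le : L1norm (horner (p - s)) <= L1norm e + L1norm (fun x => f x - p.[x]).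
  rewrite /L1norm /int11; under eq_Rintegral do rewrite -sub_eg.
  exact: Rintegral_abs_subr_le.
apply: le_trans (Rintegral_abs_le_sgr _ int_e int_g) _ => //.
rewrite lerD2l; under eq_Rintegral do rewrite sub_eg.
apply: le_trans (int11_weighted_poly_le msg (bounded_sgr _ _) size_ps Lmu_le) _.
rewrite ler_wpM2r ?ler_wpM2l ?divr_ge0 ?pi_ge0 //.
exact: le_trans (normr_ge0 _) (Lmu_le ord0).
Qed.

End Sign_moments.

Theorem theorem5p1 (R : realType) (f : R -> R)
  (hf : {within `[(-1)%R, 1%R], continuous f})
  (n : nat) (c : 'I_n.+1 -> R) (p : {poly R})
  (hp : best_L1_approx f n p) :
  let M := 2 / pi * (n.+2)%:R ^+ 2 * \big[Num.max/0]_(i < n.+1) `|Lmu f c i| in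
  M < 1 ->
  L1norm (fun x => f x - chebU_sum c x)
    <= (1 - M)^-1 * L1norm (fun x => f x - p.[x]).
Proof.
move=> M M_lt1; have [size_p p_best] := hp.
have Lmu_le i : `|Lmu f c i| <= \big[Num.max/0]_(i < n.+1) `|Lmu f c i|.
  exact: (le_bigmax _ (fun i => `|Lmu f c i|) i).
have E_le := L1norm_sub_chebU_sum_le c hf size_p Lmu_le.
have G_le_E := p_best _ (size_chebU_sum_le c); rewrite -(chebU_sumE c) in G_le_E.
set E := L1norm _ in E_le G_le_E *; set G := L1norm _ in E_le G_le_E *.
set m := \big[Num.max/0]_(i < n.+1) _ in Lmu_le E_le.
have E_ge0 : 0 <= E by apply: Rintegral_ge0 => x _.
have K_ge0 : 0 <= 2 / pi * m.
  by rewrite mulr_ge0 ?divr_ge0 ?pi_ge0 // (le_trans _ (Lmu_le ord0)).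
have two_le : 2 * n.+1%:R <= n.+2%:R ^+ 2 :> R.
  by rewrite -natrX -natrM ler_nat; nia.
have : E <= G + M * E.
  apply: le_trans E_le _; rewrite lerD2l.
  rewrite (_ : M * E = n.+2%:R ^+ 2 * (2 / pi * m * E)); last by rewrite /M -/m; ring.
  rewrite (_ : _ * m = n.+1%:R * (E + G) * (2 / pi * m)); last by ring.
  apply: (le_trans (y := n.+1%:R * (2 * E) * (2 / pi * m))).
    by rewrite ler_wpM2r // ler_wpM2l //; lra.
  rewrite (_ : _ * (2 / pi * m) = 2 * n.+1%:R * (2 / pi * m * E)); last by ring.
  by rewrite ler_wpM2r // mulr_ge0.
by rewrite ler_pdivlMl ?subr_gt0 // mulrBl mul1r lerBlDr addrC.
Qed.
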